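(* Let $a<b$, let $N\ge1$ and $T\ge1$. For a probability distribution function $F$ on $[a,b]$ and $y\in[a,b]$ let $\mathrm{CRPS}(F,y)=\int_a^b(F(u)-H(u-y))^2\,du$, where $H(x)=0$ for $x<0$ and $H(x)=1$ for $x\ge0$. Consider the online protocol: set $w_{i,1}=\frac1N$ for $1\le i\le N$; for $t=1,\dots,T$: experts $i=1,\dots,N$ announce probability distribution functions $F_{i,t}$ on $[a,b]$; the learner announces the weighted average $$F_t(u)=\sum_{i=1}^N w^*_{i,t}F_{i,t}(u),\qquad w^*_{i,t}=\frac{w_{i,t}}{\sum_{j=1}^N w_{j,t}};$$ an outcome $y_t\in[a,b]$ is revealed (arbitrarily, possibly adversarially); and the weights are updated by $w_{i,t+1}=w_{i,t}\,e^{-\frac{1}{2(b-a)}\mathrm{CRPS}(F_{i,t},y_t)}$. Then for every $1\le i\le N$, $$\sum_{t=1}^T\mathrm{CRPS}(F_t,y_t)\le\sum_{t=1}^T\mathrm{CRPS}(F_{i,t},y_t)+2(b-a)\ln N.$$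
   Context: A probability distribution function on $[a,b]$ is a non-decreasing function $F:[a,b]\to[0,1]$ with $F(a)=0$, $F(b)=1$, left-continuous and having a right limit at each point. *)

From HB Require Import structures.
From mathcomp Require Import all_boot all_order all_algebra.
From mathcomp Require Import all_classical all_reals all_analysis.
Set Implicit Arguments. Unset Strict Implicit. Unset Printing Implicit Defensive.
Import Order.TTheory GRing.Theory Num.Theory.
Import numFieldNormedType.Exports.
Local Open Scope classical_set_scope.
Local Open Scope ring_scope.

Section Defs.
Variable R : realType.

Definition is_pdf (a b : R) (F : R -> R) : Prop :=
  (forall u v, a <= u -> u <= v -> v <= b -> F u <= F v) /\
  (forall u, a <= u <= b -> 0 <= F u <= 1) /\
  F a = 0 /\ F b = 1 /\
  (forall x, a < x <= b -> F u @[u --> x^'-] --> F x) /\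
  (forall x, a <= x < b -> cvg (F u @[u --> x^'+])).

Definition Heav (x : R) : R := if x < 0 then 0 else 1.

Definition CRPS (a b : R) (F : R -> R) (y : R) : R :=
  Rintegral lebesgue_measure `[a, b] (fun u => (F u - Heav (u - y)) ^+ 2).

(* Weights, time 0-based: aa_weight .. i 0 = w_{i,1} = 1/N,
   aa_weight .. i t.+1 = w_{i,t+2} = w_{i,t+1} * exp(-CRPS(F_{i,t+1},y_{t+1})/(2(b-a))). *)
Fixpoint aa_weight (a b : R) (N : nat) (Fe : 'I_N -> nat -> R -> R)
    (y : nat -> R) (i : 'I_N) (t : nat) : R :=
  match t with
  | 0 => 1 / N%:R
  | t'.+1 => aa_weight a b Fe y i t' *
             expR (- (1 / (2 * (b - a))) * CRPS a b (Fe i t') (y t'))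
  end.

Definition aa_forecast (a b : R) (N : nat) (Fe : 'I_N -> nat -> R -> R)
    (y : nat -> R) (t : nat) : R -> R :=
  fun u => \sum_(i < N) (aa_weight a b Fe y i t /
                          \sum_(j < N) aa_weight a b Fe y j t) * Fe i t u.

End Defs.

From mathcomp Require Import all_boot all_order all_algebra.
From mathcomp Require Import all_classical all_reals all_analysis.
From mathcomp Require Import measurable_realfun ring lra.

(* Learning rate [eta = 1 / (2 (b - a))] suffices because CRPS is [eta]-mixable
   with the weighted average of forecasts as substitution function:
   [sum_i p_i exp (- eta CRPS (F_i, y)) <= exp (- eta CRPS (sum_i p_i F_i, y))].
   Applied to the normalised weights, this says that the total weight
   [W_t = sum_j w_{j,t}] satisfies [W_{t+1} <= exp (- eta CRPS (F_t, y_t)) W_t].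
   Hence [N^-1 exp (- eta L_i) = w_{i,T+1} <= W_{T+1} <= exp (- eta L)], where
   [L_i] and [L] are the cumulative losses of expert [i] and of the learner;
   taking logarithms gives [L <= L_i + ln N / eta]. *)

Set Implicit Arguments.
Unset Strict Implicit.
Unset Printing Implicit Defensive.

Import Order.TTheory GRing.Theory Num.Theory.
Import numFieldNormedType.Exports.
Local Open Scope ring_scope.

Lemma ger0_is_derive_ndecr {R : realType} (f df : R -> R) (a b : R) :
  (forall x, is_derive x (1 : R) f (df x)) -> (forall x, a < x < b -> 0 <= df x) ->
  a <= b -> f a <= f b.
Proof.
move=> fdf df_ge0 ab.
have f'E x : derive1 f x = df x by rewrite derive1E; exact: derive_val.
apply: (@ger0_derive1_ndecr _ _ a b) => //.
  by move=> x; rewrite f'E in_itv/=; exact: df_ge0.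
apply/continuous_subspaceT => x.
exact/differentiable_continuous/derivable1_diffP/ex_derive.
Qed.

(* With [g s = exp (- x s - e s^2 / 2)], the function [g s + x s] decreases on
   [[0, 1]]: its derivative is [x - k s] with [k s = (x + e s) g s], and [k]
   increases from [k 0 = x] since [k' s = (e - (x + e s)^2) g s] and
   [(x + e s)^2 <= e] by convexity. Comparing [s = 0] and [s = 1] gives the claim. *)
Lemma expR_le_1B_of_sqr_le {R : realType} (x e : R) :
  x ^+ 2 <= e -> (x + e) ^+ 2 <= e -> expR (- x - e / 2) <= 1 - x.
Proof.
move=> x2_le xe2_le.
pose g s : R := expR (- (x * s) - e / 2 * (s * s)).
have g0 : g 0 = 1 by rewrite /g !(mulr0, mul0r) subr0 oppr0 expR0.
have g'E s : is_derive s (1 : R) g (- (x + e * s) * g s).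
  by rewrite /g; apply: is_derive_eq; rewrite /GRing.scale /= !mulr1; field.
have sqr_le s : 0 <= s <= 1 -> (x + e * s) ^+ 2 <= e.
  move=> /andP[s0 s1].
  have h1 : 0 <= (1 - s) * (e - x ^+ 2) by rewrite mulr_ge0 ?subr_ge0.
  have h2 : 0 <= s * (e - (x + e) ^+ 2) by rewrite mulr_ge0 ?subr_ge0.
  have h3 : 0 <= s * (1 - s) * e ^+ 2.
    by rewrite mulr_ge0 ?sqr_ge0 // mulr_ge0 ?subr_ge0.
  lra.
have k_ge0 s : 0 <= s <= 1 -> x <= (x + e * s) * g s.
  move=> /andP[s0 s1]; rewrite -subr_ge0.
  have := @ger0_is_derive_ndecr R (fun s => (x + e * s) * g s - x)
    (fun s => (e - (x + e * s) ^+ 2) * g s) 0 s.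
  rewrite g0 mulr0 addr0 mulr1 subrr; apply => //.
  - by move=> r; apply: is_derive_eq; rewrite /GRing.scale /= !mulr1; ring.
  - move=> r /andP[r0 rs]; rewrite mulr_ge0 ?expR_ge0 // subr_ge0.
    by rewrite sqr_le // !ltW // (lt_le_trans rs).
have := @ger0_is_derive_ndecr R (fun s => - (g s + x * s))
  (fun s => (x + e * s) * g s - x) 0 1.
rewrite g0 mulr0 addr0 /g !mulr1 => h.
suff : -1 <= - (expR (- x - e / 2) + x) by lra.
apply: h => //.
- by move=> s; apply: is_derive_eq; rewrite /GRing.scale /= !mulr1 /g; ring.
- by move=> s /andP[s0 s1]; rewrite subr_ge0 k_ge0 // !ltW.
Qed.

Lemma expR_mix_le {R : realType} (I : finType) (K L : R) (p c e : I -> R) :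
  0 < K -> (forall i, 0 <= p i) -> \sum_i p i = 1 -> \sum_i p i * c i = 0 ->
  (forall i, c i ^+ 2 <= K * e i) -> (forall i, (c i + e i) ^+ 2 <= K * e i) ->
  \sum_i p i * expR (- (1 / (2 * K)) * (L + 2 * c i + e i))
  <= expR (- (1 / (2 * K)) * L).
Proof.
move=> K_gt0 p_ge0 p_sum1 pc_sum0 c_le ce_le.
have scale_le i x : x ^+ 2 <= K * e i -> (x / K) ^+ 2 <= e i / K.
  rewrite expr_div_n ler_pdivrMr ?exprn_gt0 //.
  by rewrite (_ : e i / K * K ^+ 2 = K * e i) //; field; rewrite gt_eqF.
set E := expR (- (1 / (2 * K)) * L).
have term_le i : expR (- (1 / (2 * K)) * (L + 2 * c i + e i)) <= E * (1 - c i / K).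
  have -> : - (1 / (2 * K)) * (L + 2 * c i + e i)
      = - (1 / (2 * K)) * L + (- (c i / K) - (e i / K) / 2).
    by field; rewrite gt_eqF.
  rewrite expRD ler_wpM2l ?expR_ge0 // expR_le_1B_of_sqr_le ?scale_le //.
  by rewrite -mulrDl scale_le.
apply: le_trans (ler_sum _ (fun i _ => ler_wpM2l (p_ge0 i) (term_le i))) _.
rewrite (eq_bigr (fun i => E * p i - E / K * (p i * c i))); last first.
  by move=> i _; field; rewrite gt_eqF.
by rewrite sumrB -!mulr_sumr p_sum1 pc_sum0 mulr0 subr0 mulr1.
Qed.

Lemma sqr_le_mul_of_quadratic_ge0 {R : realFieldType} (A B C : R) :
  0 <= A -> (forall t, 0 <= A * t ^+ 2 - 2 * B * t + C) -> B ^+ 2 <= A * C.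
Proof.
move=> A_ge0 quad_ge0; have [A0|A_gt0] := eqVneq A 0.
  have [->|B_neq0] := eqVneq B 0; first by rewrite expr0n /= A0 mul0r.
  have := quad_ge0 ((C + 1) / (2 * B)).
  have -> : A * ((C + 1) / (2 * B)) ^+ 2 - 2 * B * ((C + 1) / (2 * B)) + C = -1.
    by rewrite A0; field.
  by rewrite lerNr oppr0 ler10.
have {}A_gt0 : 0 < A by rewrite lt_def A_gt0.
have := quad_ge0 (B / A).
have -> : A * (B / A) ^+ 2 - 2 * B * (B / A) + C = (A * C - B ^+ 2) / A.
  by field; rewrite gt_eqF.
by rewrite pmulr_lge0 ?invr_gt0 // subr_ge0.
Qed.

Lemma normrB_le1 {R : realDomainType} (u v : R) :
  0 <= u <= 1 -> 0 <= v <= 1 -> `|u - v| <= 1.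
Proof. by move=> /andP[u0 u1] /andP[v0 v1]; rewrite ler_norml; lra. Qed.

Section bounded_measurable.
Context d (T : measurableType d) (R : realType) (D : set T).

Definition bounded_measurable (f : T -> R) :=
  measurable_fun D f /\ exists M, forall x, D x -> `|f x| <= M.

Lemma bounded_measurable_cst c : bounded_measurable (fun => c).
Proof. by split; [exact: measurable_cst | exists `|c|]. Qed.

Lemma bounded_measurableD f g : bounded_measurable f -> bounded_measurable g ->
  bounded_measurable (fun x => f x + g x).
Proof.
move=> [mf [M fM]] [mg [M' gM']]; split; first exact: measurable_funD.
exists (M + M') => x Dx; apply: le_trans (ler_normD _ _) _.
exact: lerD (fM x Dx) (gM' x Dx).
Qed.

Lemma bounded_measurableB f g : bounded_measurable f -> bounded_measurable g ->
  bounded_measurable (fun x => f x - g x).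
Proof.
move=> [mf [M fM]] [mg [M' gM']]; split; first exact: measurable_funB.
exists (M + M') => x Dx; apply: le_trans (ler_normB _ _) _.
exact: lerD (fM x Dx) (gM' x Dx).
Qed.

Lemma bounded_measurableM f g : bounded_measurable f -> bounded_measurable g ->
  bounded_measurable (fun x => f x * g x).
Proof.
move=> [mf [M fM]] [mg [M' gM']]; split; first exact: measurable_funM.
exists (`|M| * `|M'|) => x Dx; rewrite normrM.
by apply: ler_pM => //; apply: le_trans (ler_norm _); [exact: fM | exact: gM'].
Qed.

Lemma bounded_measurable_sqr f : bounded_measurable f ->
  bounded_measurable (fun x => f x ^+ 2).
Proof. by move=> bf; exact: bounded_measurableM. Qed.

Lemma bounded_measurable_sum (I : Type) (r : seq I) (f : I -> T -> R) :
  (forall i, bounded_measurable (f i)) ->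
  bounded_measurable (fun x => \sum_(i <- r) f i x).
Proof.
move=> bf; elim: r => [|i r IHr].
  by under eq_fun do rewrite big_nil; exact: bounded_measurable_cst.
by under eq_fun do rewrite big_cons; exact: bounded_measurableD.
Qed.

End bounded_measurable.

Create HintDb bounded_measurable.
#[export] Hint Resolve bounded_measurable_cst bounded_measurableD
  bounded_measurableB bounded_measurableM bounded_measurable_sqr
  bounded_measurable_sum : bounded_measurable.

Section Rintegral_bounded_measurable.
Context d (T : measurableType d) (R : realType).
Variables (mu : {measure set T -> \bar R}) (D : set T).
Hypotheses (mD : measurable D) (muD_fin : (mu D < +oo)%E).

Lemma bounded_measurable_integrable f :
  bounded_measurable D f -> mu.-integrable D (EFin \o f).
Proof.
move=> [mf [M fM]]; apply: measurable_bounded_integrable => //.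
rewrite /bounded_near; near=> M' => x Dx /=; apply: le_trans (fM x Dx) _.
by near: M'; exact: nbhs_pinfty_ge (num_real M).
Unshelve. all: end_near. Qed.

Lemma bounded_measurable_RintegralD f g :
  bounded_measurable D f -> bounded_measurable D g ->
  \int[mu]_(x in D) (f x + g x) = \int[mu]_(x in D) f x + \int[mu]_(x in D) g x.
Proof. by move=> bf bg; rewrite RintegralD // bounded_measurable_integrable. Qed.

Lemma bounded_measurable_RintegralZl f c : bounded_measurable D f ->
  \int[mu]_(x in D) (c * f x) = c * \int[mu]_(x in D) f x.
Proof. by move=> bf; rewrite RintegralZl // bounded_measurable_integrable. Qed.

Lemma bounded_measurable_Rintegral_sum (I : Type) (r : seq I) (f : I -> T -> R) :
  (forall i, bounded_measurable D (f i)) ->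
  \int[mu]_(x in D) (\sum_(i <- r) f i x) = \sum_(i <- r) \int[mu]_(x in D) f i x.
Proof.
move=> bf; elim: r => [|i r IHr].
  by under eq_fun do rewrite big_nil; rewrite big_nil Rintegral_cst // mul0r.
under eq_fun do rewrite big_cons.
rewrite bounded_measurable_RintegralD ?IHr ?big_cons //.
exact: bounded_measurable_sum.
Qed.

Lemma bounded_measurable_Rintegral_sqrD f g :
  bounded_measurable D f -> bounded_measurable D g ->
  \int[mu]_(x in D) (f x + g x) ^+ 2 = \int[mu]_(x in D) f x ^+ 2
    + 2 * \int[mu]_(x in D) (f x * g x) + \int[mu]_(x in D) g x ^+ 2.
Proof.
move=> bf bg.
have -> : (fun x => (f x + g x) ^+ 2) =
    (fun x => f x ^+ 2 + (2 * (f x * g x) + g x ^+ 2)).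
  by apply/funext => x; ring.
by rewrite !bounded_measurable_RintegralD ?bounded_measurable_RintegralZl ?addrA;
  auto with bounded_measurable.
Qed.

Lemma bounded_measurable_Rintegral_mul_sqr_le f g :
  bounded_measurable D f -> bounded_measurable D g ->
  (\int[mu]_(x in D) (f x * g x)) ^+ 2 <=
  \int[mu]_(x in D) f x ^+ 2 * \int[mu]_(x in D) g x ^+ 2.
Proof.
move=> bf bg; apply: sqr_le_mul_of_quadratic_ge0.
  by apply: Rintegral_ge0 => x _; exact: sqr_ge0.
move=> t; have -> : \int[mu]_(x in D) f x ^+ 2 * t ^+ 2
    - 2 * \int[mu]_(x in D) (f x * g x) * t + \int[mu]_(x in D) g x ^+ 2
    = \int[mu]_(x in D) (t * f x - g x) ^+ 2.
  have -> : (fun x => (t * f x - g x) ^+ 2) = (fun x =>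
      t ^+ 2 * f x ^+ 2 + (- 2 * t) * (f x * g x) + g x ^+ 2).
    by apply/funext => x; ring.
  rewrite !bounded_measurable_RintegralD ?bounded_measurable_RintegralZl;
    auto with bounded_measurable.
  by ring.
by apply: Rintegral_ge0 => x _; exact: sqr_ge0.
Qed.

Lemma bounded_measurable_Rintegral_sqr_le f :
  bounded_measurable D f -> (forall x, D x -> `|f x| <= 1) ->
  \int[mu]_(x in D) f x ^+ 2 <= fine (mu D).
Proof.
move=> bf f_le1; rewrite -[leRHS]mul1r -Rintegral_cst //.
apply: le_Rintegral => //.
- by apply: bounded_measurable_integrable; auto with bounded_measurable.
- exact/bounded_measurable_integrable/bounded_measurable_cst.
move=> x Dx; rewrite -real_normK ?num_real // exprn_ile1 //.
exact: f_le1.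
Qed.

Lemma bounded_measurable_Rintegral_mul_sqr_le_measure f g :
  bounded_measurable D f -> bounded_measurable D g ->
  (forall x, D x -> `|f x| <= 1) ->
  (\int[mu]_(x in D) (f x * g x)) ^+ 2 <= fine (mu D) * \int[mu]_(x in D) g x ^+ 2.
Proof.
move=> bf bg f_le1.
apply: le_trans (bounded_measurable_Rintegral_mul_sqr_le bf bg) _.
rewrite ler_wpM2r ?bounded_measurable_Rintegral_sqr_le //.
by apply: Rintegral_ge0 => x _; exact: sqr_ge0.
Qed.

End Rintegral_bounded_measurable.

Section CRPS.
Variable R : realType.
Implicit Types (a b y : R) (F G : R -> R).

Lemma lebesgue_measure_itvcc a b : a <= b ->
  lebesgue_measure (`[a, b] : set R) = (b - a)%:E.
Proof.
move=> ab; rewrite lebesgue_measure_itv /= lte_fin.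
by case: ltgtP ab => // ->; rewrite subrr.
Qed.

Lemma measurable_fun_itv_ndecr a b F : a <= b ->
  (forall u v, a <= u -> u <= v -> v <= b -> F u <= F v) ->
  measurable_fun `[a, b] F.
Proof.
move=> ab F_ndecr.
(* Clamping the argument to [[a, b]] gives a nondecreasing function on [R]. *)
pose G u := F (Num.min (Num.max u a) b).
have mG : measurable_fun `[a, b] G.
  apply: nondecreasing_measurable => // u v uv; apply: F_ndecr.
  - by rewrite le_min le_max lexx ab orbT.
  - by apply: le_min2 => //; apply: le_max2.
  - by rewrite ge_min lexx orbT.
apply: eq_measurable_fun mG => x; rewrite inE /= in_itv /= => /andP[ax xb].
by rewrite /G (max_idPl ax) (min_idPl xb).
Qed.

Lemma measurable_fun_pdf a b F : a <= b -> is_pdf a b F -> measurable_fun `[a, b] F.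
Proof. by move=> ab [F_ndecr _]; exact: measurable_fun_itv_ndecr. Qed.

Lemma Heav_ge0_le1 (x : R) : 0 <= Heav x <= 1.
Proof. by rewrite /Heav; case: ifP; rewrite lexx ler01. Qed.

Lemma nondecreasing_Heav : nondecreasing_fun (@Heav R).
Proof.
move=> u v uv; rewrite /Heav; have [v_lt0|_] := ltP v 0.
  by rewrite (le_lt_trans uv v_lt0).
by case: ifP; rewrite ?ler01.
Qed.

Lemma bounded_measurable_Heav (D : set R) y : measurable D ->
  bounded_measurable D (fun u => Heav (u - y)).
Proof.
move=> mD; split; last first.
  by exists 1 => u _; rewrite ger0_norm; case/andP: (Heav_ge0_le1 (u - y)).
apply: nondecreasing_measurable => // u v uv.
by apply: nondecreasing_Heav; rewrite lerD2r.
Qed.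

Local Notation mu := (@lebesgue_measure R).

Let bounded_measurable_itv_Heav a b y :
  bounded_measurable `[a, b] (fun u => Heav (u - y)).
Proof. by apply: bounded_measurable_Heav; exact: measurable_itv. Qed.

(* Not [Hint Resolve]: goals about [mu] live on [measurableTypeR R], which is
   only convertible to the measurable type of [R] used in these statements. *)
#[local] Hint Extern 0 (bounded_measurable _ _) =>
  exact: bounded_measurable_itv_Heav : bounded_measurable.

Lemma lebesgue_measure_itvcc_lty a b : a <= b -> (mu `[a, b] < +oo)%E.
Proof. by move=> ab; rewrite lebesgue_measure_itvcc ?ltry. Qed.

Lemma CRPS_expand a b y F G : a <= b ->
  bounded_measurable `[a, b] F -> bounded_measurable `[a, b] G ->
  CRPS a b G y = CRPS a b F y
    + 2 * \int[mu]_(u in `[a, b]) ((F u - Heav (u - y)) * (G u - F u))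
    + \int[mu]_(u in `[a, b]) (G u - F u) ^+ 2.
Proof.
move=> ab bF bG; rewrite /CRPS.
have -> : (fun u => (G u - Heav (u - y)) ^+ 2) =
    (fun u => ((F u - Heav (u - y)) + (G u - F u)) ^+ 2).
  by apply/funext => u; congr (_ ^+ 2); ring.
rewrite [LHS]bounded_measurable_Rintegral_sqrD //; auto with bounded_measurable.
exact: lebesgue_measure_itvcc_lty.
Qed.

(* With [X = Fp - H] and [D_i = F_i - Fp], the loss of expert [i] exceeds that
   of the mixture [Fp] by [2 c_i + e_i], where [c_i = int X D_i] averages to [0]
   and [e_i = int D_i^2]. Cauchy-Schwarz against [|X| <= 1] and
   [|X + D_i| = |F_i - H| <= 1] gives [c_i^2 <= (b - a) e_i] and
   [(c_i + e_i)^2 <= (b - a) e_i], which is what [expR_mix_le] needs. *)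
Section mixture.
Variables (I : finType) (a b y : R) (p : I -> R) (F : I -> R -> R).
Hypotheses (lt_ab : a < b) (p_ge0 : forall i, 0 <= p i) (p_sum1 : \sum_i p i = 1).
Hypotheses (mF : forall i, measurable_fun `[a, b] (F i))
  (F01 : forall i u, a <= u <= b -> 0 <= F i u <= 1).

Let le_ab : a <= b := ltW lt_ab.
Let mu_fin : (mu `[a, b] < +oo)%E := lebesgue_measure_itvcc_lty le_ab.
Let muE : fine (mu `[a, b]) = b - a.
Proof. by rewrite lebesgue_measure_itvcc. Qed.

Let Fp u := \sum_i p i * F i u.
Let X u := Fp u - Heav (u - y).

Let bF i : bounded_measurable `[a, b] (F i).
Proof.
split; first exact: mF.
exists 1 => u; rewrite /= in_itv/= => /(F01 i)/andP[F0 F1].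
by rewrite ger0_norm.
Qed.

#[local] Hint Extern 0 (bounded_measurable _ _) => exact: bF : bounded_measurable.

Let bFp : bounded_measurable `[a, b] Fp.
Proof. by rewrite /Fp; auto with bounded_measurable. Qed.

#[local] Hint Extern 0 (bounded_measurable _ _) => exact: bFp : bounded_measurable.

Let bX : bounded_measurable `[a, b] X.
Proof. by rewrite /X; auto with bounded_measurable. Qed.

#[local] Hint Extern 0 (bounded_measurable _ _) => exact: bX : bounded_measurable.

Let Fp01 u : a <= u <= b -> 0 <= Fp u <= 1.
Proof.
move=> /F01 Fu01; rewrite sumr_ge0 => [|i _]; last first.
  by rewrite mulr_ge0 //; case/andP: (Fu01 i).
rewrite -p_sum1 ler_sum // => i _.
by rewrite ler_piMr //; case/andP: (Fu01 i).
Qed.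

Let c i := \int[mu]_(u in `[a, b]) (X u * (F i u - Fp u)).
Let e i := \int[mu]_(u in `[a, b]) (F i u - Fp u) ^+ 2.

Let c_sum0 : \sum_i p i * c i = 0.
Proof.
rewrite (eq_bigr (fun i =>
    \int[mu]_(u in `[a, b]) (p i * (X u * (F i u - Fp u))))); last first.
  move=> i _; rewrite bounded_measurable_RintegralZl //.
  by auto with bounded_measurable.
rewrite -bounded_measurable_Rintegral_sum //; last by auto with bounded_measurable.
have -> : (fun u => \sum_i p i * (X u * (F i u - Fp u))) = (fun => 0).
  apply/funext => u.
  rewrite (eq_bigr (fun i => X u * (p i * F i u) - X u * Fp u * p i)); last first.
    by move=> i _; ring.
  by rewrite sumrB -!mulr_sumr p_sum1 mulr1 subrr.
by rewrite Rintegral_cst // mul0r.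
Qed.

Let c_le i : c i ^+ 2 <= (b - a) * e i.
Proof.
rewrite -muE; apply: bounded_measurable_Rintegral_mul_sqr_le_measure;
  auto with bounded_measurable.
move=> u; rewrite /= in_itv/= => u_ab.
by apply: normrB_le1; rewrite ?Fp01 ?Heav_ge0_le1.
Qed.

Let ce_le i : (c i + e i) ^+ 2 <= (b - a) * e i.
Proof.
have -> : c i + e i =
    \int[mu]_(u in `[a, b]) ((F i u - Heav (u - y)) * (F i u - Fp u)).
  rewrite -bounded_measurable_RintegralD //; auto with bounded_measurable.
  by congr Rintegral; apply/funext => u; rewrite /X; ring.
rewrite -muE; apply: bounded_measurable_Rintegral_mul_sqr_le_measure;
  auto with bounded_measurable.
move=> u; rewrite /= in_itv/= => u_ab.
by apply: normrB_le1; rewrite ?F01 ?Heav_ge0_le1.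
Qed.

Lemma CRPS_mixable :
  \sum_i p i * expR (- (1 / (2 * (b - a))) * CRPS a b (F i) y)
  <= expR (- (1 / (2 * (b - a))) * CRPS a b (fun u => \sum_i p i * F i u) y).
Proof.
under eq_bigr do rewrite (CRPS_expand y le_ab bFp (bF _)).
apply: (expR_mix_le _ _ p_ge0 p_sum1 c_sum0 c_le ce_le).
by rewrite subr_gt0.
Qed.

End mixture.

End CRPS.

Section exponential_weights.
Variables (R : realType) (a b : R) (N : nat) (F : 'I_N -> nat -> R -> R) (y : nat -> R).
Hypotheses (lt_ab : a < b) (N_gt0 : (0 < N)%N).

Local Notation w := (aa_weight a b F y).
Local Notation eta := (1 / (2 * (b - a))).
Local Notation loss i t := (CRPS a b (F i t) (y t)).
Local Notation aa_loss t := (CRPS a b (aa_forecast a b F y t) (y t)).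

Lemma aa_weight_gt0 i t : 0 < w i t.
Proof.
elim: t => [|t IHt] /=; first by rewrite divr_gt0 ?ltr0n.
by rewrite mulr_gt0 ?expR_gt0.
Qed.

Lemma aa_weightE i t : w i t = N%:R^-1 * expR (- eta * \sum_(s < t) loss i s).
Proof.
elim: t => [|t IHt] /=; first by rewrite big_ord0 mulr0 expR0 mulr1 div1r.
by rewrite IHt big_ord_recr /= [in RHS]mulrDr expRD mulrA.
Qed.

Lemma aa_total_weight0 : \sum_j w j 0 = 1.
Proof.
rewrite /= sumr_const card_ord div1r -[LHS]mulr_natr mulVf //.
by rewrite pnatr_eq0 -lt0n.
Qed.

Lemma aa_weight_le_total i t : w i t <= \sum_j w j t.
Proof.
rewrite (bigD1 i) //= lerDl sumr_ge0 // => j _.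
exact/ltW/aa_weight_gt0.
Qed.

Lemma aa_total_weightS t : (forall j, is_pdf a b (F j t)) ->
  \sum_j w j t.+1 <= expR (- eta * aa_loss t) * \sum_j w j t.
Proof.
move=> pdfF; set W := \sum_j w j t.
have W_gt0 : 0 < W.
  pose j0 := Ordinal N_gt0.
  exact: lt_le_trans (aa_weight_gt0 j0 t) (aa_weight_le_total j0 t).
have -> : \sum_j w j t.+1 =
    W * \sum_j (w j t / W) * expR (- eta * loss j t).
  by rewrite mulr_sumr; apply: eq_bigr => j _ /=; field; rewrite gt_eqF.
rewrite mulrC ler_pM2r //.
rewrite /aa_forecast -/W; apply: CRPS_mixable => //.
- by move=> j; rewrite divr_ge0 ?ltW ?aa_weight_gt0.
- by rewrite -mulr_suml divff ?gt_eqF.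
- by move=> j; apply: measurable_fun_pdf (pdfF j); exact: ltW.
- by move=> j u; case: (pdfF j) => _ [F01 _]; exact: F01.
Qed.

Lemma aa_total_weight_le T : (forall j t, (t < T)%N -> is_pdf a b (F j t)) ->
  \sum_j w j T <= expR (- eta * \sum_(t < T) aa_loss t).
Proof.
move=> pdfF; elim: T pdfF => [|T IHT] pdfF.
  by rewrite aa_total_weight0 big_ord0 mulr0 expR0.
apply: le_trans (aa_total_weightS (fun j => pdfF j T (ltnSn T))) _.
rewrite big_ord_recr /= [in leRHS]mulrDr expRD mulrC ler_pM2r ?expR_gt0 //.
by apply: IHT => j t tT; apply: pdfF; exact: ltnW.
Qed.

End exponential_weights.

Theorem mainTheorem4 (R : realType) (a b : R) (N T : nat)
    (Fe : 'I_N -> nat -> R -> R) (y : nat -> R) :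
  a < b -> (1 <= N)%N -> (1 <= T)%N ->
  (forall (i : 'I_N) (t : nat), (t < T)%N -> is_pdf a b (Fe i t)) ->
  (forall t : nat, (t < T)%N -> a <= y t <= b) ->
  forall i : 'I_N,
    \sum_(t < T) CRPS a b (aa_forecast a b Fe y t) (y t)
    <= \sum_(t < T) CRPS a b (Fe i t) (y t) + 2 * (b - a) * ln (N%:R : R).
Proof.
move=> lt_ab N_gt0 _ pdfF _ i.
set P := \sum_(t < T) _; set S := \sum_(t < T) _.
have K_gt0 : 0 < 2 * (b - a) by rewrite mulr_gt0 // subr_gt0.
have := le_trans (aa_weight_le_total a b Fe y N_gt0 i T)
  (aa_total_weight_le y lt_ab N_gt0 pdfF).
rewrite aa_weightE -/S -/P -[N%:R^-1]lnK ?posrE ?invr_gt0 ?ltr0n //.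
rewrite -expRD ler_expR lnV ?posrE ?ltr0n // => weight_le.
have Kinv_gt0 : 0 < (2 * (b - a))^-1 by rewrite invr_gt0.
rewrite -(ler_pM2r Kinv_gt0) [leRHS]mulrDl mulrAC divff ?gt_eqF // mul1r.
lra.
Qed.
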